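(* Let $(\mathfrak{A},\mathfrak{A}_0)$ be a *-semisimple CQ*-algebra as in the context, let $X\in\mathfrak{A}$ be normal, $\varphi\in\mathcal{P}_{\mathfrak{A}_0}(\mathfrak{A})$ and $\alpha\in\mathbb{C}$. Then $\varphi$ is a generalized eigenvector of $X$ with generalized eigenvalue $\alpha$ if and only if $\varphi$ is a generalized eigenvector of $X^*$ with generalized eigenvalue $\overline{\alpha}$.
   Context: Let $\mathfrak{A}_0$ be a unital C*-algebra with C*-norm $\|\cdot\|_0$ and unit $I$, and $\|\cdot\|$ another norm on $\mathfrak{A}_0$ with $\|A\|\le\|A\|_0$, $\|AB\|\le\|A\|\,\|B\|_0$, $\|A^*\|=\|A\|$. $\mathfrak{A}$ is the $\|\cdot\|$-completion of $\mathfrak{A}_0$, with $XA,AX,X^*$ ($X\in\mathfrak{A},A\in\mathfrak{A}_0$) defined as $\|\cdot\|$-limits of $A_nA$, $AA_n$, $A_n^*$ for $A_n\in\mathfrak{A}_0$, $A_n\to X$. $\mathcal{P}_{\mathfrak{A}_0}(\mathfrak{A})$ is the set of sesquilinear forms $\varphi$ on $\mathfrak{A}\times\mathfrak{A}$ with $\varphi(X,X)\ge0$, $\varphi(XA,B)=\varphi(A,X^*B)$ for $X\in\mathfrak{A}$, $A,B\in\mathfrak{A}_0$, and $|\varphi(X,Y)|\le\gamma\|X\|\|Y\|$ for some $\gamma>0$; $\mathcal{S}_{\mathfrak{A}_0}(\mathfrak{A})$ is the subset with $\gamma\le1$. *-semisimple: for every $X\ne0$ there is $\varphi\in\mathcal{S}_{\mathfrak{A}_0}(\mathfrak{A})$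 with $\varphi(X,X)>0$. $X\in\mathfrak{A}$ is normal if $\varphi(XA,XA)=\varphi(X^*A,X^*A)$ for all $\varphi\in\mathcal{P}_{\mathfrak{A}_0}(\mathfrak{A})$, $A\in\mathfrak{A}_0$. A nonzero $\varphi\in\mathcal{P}_{\mathfrak{A}_0}(\mathfrak{A})$ is a generalized eigenvector of $Z\in\mathfrak{A}$ with generalized eigenvalue $\beta\in\mathbb{C}$ if there exists $A\in\mathfrak{A}_0$ with $\varphi(A,A)>0$ and $\varphi(ZA-\beta A,B)=0$ for all $B\in\mathfrak{A}_0$. *)

From HB Require Import structures.
From mathcomp Require Import all_boot all_order all_algebra.
From mathcomp Require Import complex.
From mathcomp Require Import reals.
Set Implicit Arguments. Unset Strict Implicit. Unset Printing Implicit Defensive.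
Import Order.TTheory GRing.Theory Num.Theory.
Local Open Scope ring_scope.

Section CQstarDefs.
Variable R : realType.
Local Notation C := R[i].

Definition seq_cvg_to {V : zmodType} (nV : V -> R) (u : nat -> V) (x : V) :=
  forall e : R, 0 < e -> exists N : nat, forall n : nat, (N <= n)%N -> nV (u n - x) < e.

Definition seq_cauchy {V : zmodType} (nV : V -> R) (u : nat -> V) :=
  forall e : R, 0 < e -> exists N : nat,
    forall m n : nat, (N <= m)%N -> (N <= n)%N -> nV (u m - u n) < e.

Definition is_cnorm {V : lmodType C} (nV : V -> R) :=
  [/\ forall x, 0 <= nV x,
      forall x, nV x = 0 -> x = 0,
      forall (c : C) x, nV (c *: x) = Normc.normc c * nV x &
      forall x y, nV (x + y) <= nV x + nV y].

(* The data of a CQ*-algebra (A, A0) as in the paper: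
   - A0 is a unital C*-algebra with involution star0 and C*-norm n0;
   - n is another norm on A0 with n a <= n0 a, n (a b) <= n a * n0 b,
     n (a^* ) = n a;
   - A (with norm nA) is the n-completion of A0, iota : A0 -> A the canonical
     (linear, isometric, dense) embedding, A complete;
   - rmul X a = "X a", lmul a X = "a X", starA X = "X^*" for X in A, a in A0,
     defined as nA-limits of iota (a_k a), iota (a a_k), iota (a_k^* )
     for any sequence a_k in A0 with iota a_k -> X. *)
Record CQstar (A0 : algType C) (A : lmodType C) := {
  star0 : A0 -> A0;
  n0 : A0 -> R;
  n : A0 -> R;
  nA : A -> R;
  iota : A0 -> A;
  rmul : A -> A0 -> A;
  lmul : A0 -> A -> A;
  starA : A -> A;
  star0D : forall a b, star0 (a + b) = star0 a + star0 b;
  star0Z : forall (c : C) a, star0 (c *: a) = conjc c *: star0 a;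
  star0M : forall a b, star0 (a * b) = star0 b * star0 a;
  star0K : forall a, star0 (star0 a) = a;
  n0_norm : is_cnorm n0;
  n0M : forall a b, n0 (a * b) <= n0 a * n0 b;
  n0_Cstar : forall a, n0 (star0 a * a) = n0 a ^+ 2;
  n0_complete : forall u : nat -> A0, seq_cauchy n0 u -> exists x, seq_cvg_to n0 u x;
  n_norm : is_cnorm n;
  n_le_n0 : forall a, n a <= n0 a;
  nM : forall a b, n (a * b) <= n a * n0 b;
  n_star : forall a, n (star0 a) = n a;
  nA_norm : is_cnorm nA;
  iota_linear : forall (c : C) a b, iota (c *: a + b) = c *: iota a + iota b;
  iota_isometric : forall a, nA (iota a) = n a;
  iota_dense : forall (X : A) (e : R), 0 < e -> exists a, nA (X - iota a) < e;
  nA_complete : forall u : nat -> A, seq_cauchy nA u -> exists X, seq_cvg_to nA u X;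
  ops_limit : forall (u : nat -> A0) (X : A), seq_cvg_to nA (fun k => iota (u k)) X ->
    [/\ forall a, seq_cvg_to nA (fun k => iota (u k * a)) (rmul X a),
        forall a, seq_cvg_to nA (fun k => iota (a * u k)) (lmul a X) &
        seq_cvg_to nA (fun k => iota (star0 (u k))) (starA X)]
}.

Variables (A0 : algType C) (A : lmodType C) (Q : CQstar A0 A).

Definition sesquilinear (phi : A -> A -> C) :=
  (forall (c : C) X Y Z, phi (c *: X + Y) Z = c * phi X Z + phi Y Z) /\
  (forall (c : C) X Y Z, phi X (c *: Y + Z) = conjc c * phi X Y + phi X Z).

Definition PA0_bound (phi : A -> A -> C) (gamma : R) :=
  [/\ sesquilinear phi,
      forall X, 0 <= phi X X,
      forall X a b, phi (rmul Q X a) (iota Q b) = phi (iota Q a) (rmul Q (starA Q X) b) &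
      forall X Y, Normc.normc (phi X Y) <= gamma * nA Q X * nA Q Y].

Definition PA0 (phi : A -> A -> C) := exists2 gamma : R, 0 < gamma & PA0_bound phi gamma.

Definition SA0 (phi : A -> A -> C) :=
  exists gamma : R, [/\ 0 < gamma, gamma <= 1 & PA0_bound phi gamma].

Definition star_semisimple :=
  forall X : A, X <> 0 -> exists2 phi, SA0 phi & 0 < phi X X.

Definition normal_elt (X : A) :=
  forall phi, PA0 phi -> forall a,
    phi (rmul Q X a) (rmul Q X a) = phi (rmul Q (starA Q X) a) (rmul Q (starA Q X) a).

Definition gen_eigenvector (phi : A -> A -> C) (Z : A) (beta : C) :=
  [/\ PA0 phi, phi <> (fun _ _ => 0) &
      exists a : A0, 0 < phi (iota Q a) (iota Q a) /\
        forall b : A0, phi (rmul Q Z a - beta *: iota Q a) (iota Q b) = 0].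

End CQstarDefs.

From Pilot Require Import Defs.
From HB Require Import structures.
From mathcomp Require Import all_boot all_order all_algebra.
From mathcomp Require Import complex.
From mathcomp Require Import reals.
From mathcomp Require Import ring lra.
Import Order.TTheory GRing.Theory Num.Theory.
Local Open Scope ring_scope.
Local Open Scope complex_scope.

(* A positive form phi bounded by the norm of A vanishes on (W, A) as soon as
   it vanishes on the dense subspace (W, A0), and by the Cauchy-Schwarz
   argument this happens iff phi(W, W) = 0.  Hence alpha is a generalized
   eigenvalue of X with witness a iff phi(W, W) = 0 for W = Xa - alpha a.
   Expanding, phi(W, W) = phi(Xa, Xa) - 2 Re(conj alpha phi(Xa, a))
   + |alpha|^2 phi(a, a), and since phi(Xa, a) = phi(a, X^* a) and X is normal
   this quantity is unchanged by (X, alpha) -> (X^*, conj alpha). *)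

Lemma quad_ge0_lin_eq0 {R : realFieldType} (u rho : R) : 0 <= rho ->
  (forall s : R, 0 <= s * u + s ^+ 2 * rho) -> u = 0.
Proof.
move=> rho_ge0 quad_ge0.
have rho1_gt0 : 0 < rho + 1 by lra.
have [k u_def] : exists k, u = k * (rho + 1).
  by exists (u / (rho + 1)); rewrite mulrVK // unitfE gt_eqF.
have k_quad := quad_ge0 (- k); rewrite u_def in k_quad *.
have -> : k = 0 by nra.
by rewrite mul0r.
Qed.

Lemma cquad_ge0_conj {R : rcfType} (r q p s : R[i]) : 0 <= r -> 0 <= s ->
  (forall t, 0 <= t * (conjc t * r + q) + (conjc t * p + s)) -> q = conjc p.
Proof.
case: r q p s => [r1 r2] [q1 q2] [p1 p2] [s1 s2] r_ge0 s_ge0 quad_ge0.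
move: r_ge0 s_ge0 (quad_ge0 1) (quad_ge0 'i); rewrite !lecE /=.
move=> /andP[/eqP r2_0 _] /andP[/eqP s2_0 _] /andP[/eqP im1 _] /andP[/eqP imi _].
apply/eqP; rewrite eq_complex /=; apply/andP; split; apply/eqP; lra.
Qed.

Lemma cquad_ge0_lin_eq0 {R : rcfType} (r q p : R[i]) : 0 <= r ->
  (forall t, 0 <= t * (conjc t * r + q) + conjc t * p) -> p = 0.
Proof.
move=> r_ge0 quad_ge0.
have q_def : q = conjc p.
  by apply: (@cquad_ge0_conj _ r q p 0 r_ge0 (lexx 0)) => t; rewrite addr0.
move: r_ge0 quad_ge0; subst q.
case: r p => [r1 r2] [p1 p2]; rewrite lecE /= => /andP[/eqP r2_0 r1_ge0] quad_ge0.
have re_ge0 (x : R) : 0 <= x * (p1 *+ 2) + x ^+ 2 * r1.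
  by move: (quad_ge0 x%:C); rewrite lecE /= r2_0 => /andP[_]; lra.
have im_ge0 (x : R) : 0 <= x * (p2 *+ 2) + x ^+ 2 * r1.
  by move: (quad_ge0 (0 +i* x)); rewrite lecE /= r2_0 => /andP[_]; lra.
have re0 := quad_ge0_lin_eq0 _ _ r1_ge0 re_ge0.
have im0 := quad_ge0_lin_eq0 _ _ r1_ge0 im_ge0.
by apply/eqP; rewrite eq_complex /=; apply/andP; split; apply/eqP; lra.
Qed.

Section PositiveSesquilinearForm.
Context {R : realType} {V : lmodType R[i]} {phi : V -> V -> R[i]}.
Hypotheses (phi_sesqui : sesquilinear phi) (phi_ge0 : forall X, 0 <= phi X X).

Lemma form_expand (t : R[i]) (Z Y : V) :
  phi (t *: Z + Y) (t *: Z + Y) =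
  t * (conjc t * phi Z Z + phi Z Y) + (conjc t * phi Y Z + phi Y Y).
Proof. by case: phi_sesqui => linl linr; rewrite linl !linr. Qed.

Lemma form_hermitian (Y Z : V) : phi Z Y = conjc (phi Y Z).
Proof.
by apply: (@cquad_ge0_conj R _ _ _ _ (phi_ge0 Z) (phi_ge0 Y)) => t; rewrite -form_expand.
Qed.

Lemma form_isotropic_eq0 (W : V) : phi W W = 0 -> forall Z, phi W Z = 0.
Proof.
move=> W_iso Z; apply: (@cquad_ge0_lin_eq0 R _ (phi Z W) _ (phi_ge0 Z)) => t.
by have := phi_ge0 (t *: Z + W); rewrite form_expand W_iso addr0.
Qed.

End PositiveSesquilinearForm.

Section FormsOnCQstarAlgebra.
Context {R : realType} {A0 : algType R[i]} {A : lmodType R[i]} {Q : CQstar A0 A}.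
Context {phi : A -> A -> R[i]} (phi_PA0 : PA0 Q phi).

Lemma PA0_eq0_iota (Y : A) :
  (forall b, phi Y (Defs.iota Q b) = 0) -> forall Z, phi Y Z = 0.
Proof.
have [g g_gt0 [[_ linr] _ _ phi_bound]] := phi_PA0.
have [nA_ge0 _ _ _] := nA_norm Q.
move=> Y_iota0 Z; set c := g * nA Q Y.
have c_ge0 : 0 <= c by rewrite mulr_ge0 ?nA_ge0 ?ltW.
have approx b : Normc.normc (phi Y Z) <= c * nA Q (Z - Defs.iota Q b).
  rewrite -[in phi Y Z](subrK (Defs.iota Q b) Z) -[_ - _]scale1r.
  by rewrite linr Y_iota0 addr0 conjc1 mul1r scale1r; apply: phi_bound.
have normc_ge0 : 0 <= Normc.normc (phi Y Z) by case: (phi Y Z) => *; apply: sqrtr_ge0.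
apply: Normc.eq0_normc; apply/eqP; rewrite eq_le normc_ge0 andbT.
apply/ler_addgt0Pr => e e_gt0; rewrite add0r.
have [b] := iota_dense Q Z (divr_gt0 e_gt0 (ltr_pwDr ltr01 c_ge0)).
rewrite ltr_pdivlMr ?(ltr_pwDr ltr01 c_ge0) // => Zb_close.
have Zb_ge0 := nA_ge0 (Z - Defs.iota Q b); have := approx b; nra.
Qed.

Lemma PA0_iota_eq0P (W : A) :
  (forall b, phi W (Defs.iota Q b) = 0) <-> phi W W = 0.
Proof.
have [g _ [phi_sesqui phi_ge0 _ _]] := phi_PA0.
split=> [W_iota0 | W_iso b]; first exact: PA0_eq0_iota.
exact: form_isotropic_eq0.
Qed.

Lemma PA0_normal_shift (X : A) (a : A0) (alpha : R[i]) :
  phi (rmul Q X a) (rmul Q X a) =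
    phi (rmul Q (starA Q X) a) (rmul Q (starA Q X) a) ->
  phi (rmul Q X a - alpha *: Defs.iota Q a) (rmul Q X a - alpha *: Defs.iota Q a) =
  phi (rmul Q (starA Q X) a - conjc alpha *: Defs.iota Q a)
      (rmul Q (starA Q X) a - conjc alpha *: Defs.iota Q a).
Proof.
have [g _ [phi_sesqui phi_ge0 phi_adj _]] := phi_PA0.
move=> X_normal.
rewrite -!scaleNr ![_ + (- _ *: _)]addrC !(form_expand phi_sesqui) X_normal.
rewrite (form_hermitian phi_sesqui phi_ge0 (Defs.iota Q a) (rmul Q (starA Q X) a)).
rewrite (form_hermitian phi_sesqui phi_ge0 (rmul Q X a) (Defs.iota Q a)) -phi_adj.
by rewrite !rmorphN /= conjcK; ring.
Qed.

End FormsOnCQstarAlgebra.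

Theorem proposition4p15 (R : realType) (A0 : algType R[i]) (A : lmodType R[i])
  (Q : CQstar A0 A) (hss : star_semisimple Q)
  (X : A) (hX : normal_elt Q X)
  (phi : A -> A -> R[i]) (hphi : PA0 Q phi) (alpha : R[i]) :
  gen_eigenvector Q phi X alpha <-> gen_eigenvector Q phi (starA Q X) (conjc alpha).
Proof.
have eigen_at_iff a :
    (forall b, phi (rmul Q X a - alpha *: Defs.iota Q a) (Defs.iota Q b) = 0) <->
    (forall b, phi (rmul Q (starA Q X) a - conjc alpha *: Defs.iota Q a)
                   (Defs.iota Q b) = 0).
  have shift := PA0_normal_shift hphi X a alpha (hX phi hphi a).
  by split=> /(PA0_iota_eq0P hphi) W_iso; apply/(PA0_iota_eq0P hphi);
    [rewrite -shift | rewrite shift].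
split=> -[phi_PA0 phi_neq0 [a [a_pos a_eigen]]]; split=> //.
- by exists a; split; last apply/eigen_at_iff.
- by exists a; split; last apply/eigen_at_iff.
Qed.
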